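(* Let $X=(X_1,X_2,\ldots)$ be a stationary, $\psi$-mixing process with values in a finite set $\mathbb X$. Then there exists a sequence $(\lambda_\tau)_{\tau\ge0}$ with $\lambda_\tau\to0$ as $\tau\to\infty$ such that for all $t\in\mathbb N$, all $\tau\in\{0,1,2,\ldots\}$, all $T\in\{0,1,2,\ldots\}$, all $\mathbb A\subseteq\mathbb X^t$ with $\Pr(X_1^t\in\mathbb A)>0$ and all $\mathbb B\subseteq\mathbb X^T$, $$\Pr(X_{t+\tau+1}^{t+\tau+T}\in\mathbb B\mid X_1^t\in\mathbb A)=(1-\lambda_\tau)P_T(\mathbb B)+\lambda_\tau P'_{t,\tau,T,\mathbb A}(\mathbb B)$$ for some probability distribution $P'_{t,\tau,T,\mathbb A}$ on $\mathbb X^T$ (which may depend on $t,\tau,T,\mathbb A$ but not on $\mathbb B$).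
   Context: $X_a^b=(X_a,\ldots,X_b)$. $P_T(\mathbb B)=\Pr(X_{s+1}^{s+T}\in\mathbb B)$ for $\mathbb B\subseteq\mathbb X^T$, which is independent of $s$ by stationarity. $\psi$-mixing: for $\tau\in\{0,1,2,\ldots\}$ let $\psi(\tau)=\sup_{t\in\mathbb N}\sup_{\mathbb A,\mathbb B}\left|\frac{\Pr(X_1^t\in\mathbb A,\,X_{t+\tau+1}^\infty\in\mathbb B)}{\Pr(X_1^t\in\mathbb A)\Pr(X_{t+\tau+1}^\infty\in\mathbb B)}-1\right|$, the inner supremum over $\mathbb A\subseteq\mathbb X^t$ and Borel (product $\sigma$-field) sets $\mathbb B$ of sequences indexed by times $t+\tau+1,t+\tau+2,\ldots$, with both probabilities in the denominator positive. $X$ is $\psi$-mixing if $\psi(\tau)\to0$ as $\tau\to\infty$. *)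

From mathcomp Require Import all_boot all_order all_algebra.
From mathcomp Require Import all_classical all_reals all_analysis.
Unset Printing Implicit Defensive.
Import Order.TTheory GRing.Theory Num.Theory.
Local Open Scope classical_set_scope.
Local Open Scope ring_scope.

(* Conventions: the paper's X_1, X_2, ... is X 0, X 1, ... here (0-indexed).
   The finite alphabet is a finType T; X^n is {ffun 'I_n -> T}. *)
Section Defs.
Context {d : measure_display} {Omega : measurableType d} {R : realType}.
Variable P : probability Omega R.
Context {T : finType}.
Variable X : nat -> Omega -> T.

(* the word (X_{s+1}, ..., X_{s+n}) (paper indexing) *)
Definition block (s n : nat) (w : Omega) : {ffun 'I_n -> T} :=
  [ffun i : 'I_n => X (s + i) w].

Definition block_event (s n : nat) (A : {set {ffun 'I_n -> T}}) : set Omega :=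
  [set w | block s n w \in A].

Definition Pr (E : set Omega) : R := fine (P E).

Definition stationary : Prop :=
  forall (n s : nat) (B : {set {ffun 'I_n -> T}}),
    P (block_event s n B) = P (block_event 0 n B).

Definition cylinder_sets : set (set (nat -> T)) :=
  [set C | exists (j : nat) (x : T), C = [set u | u j = x]].
Definition product_sigma : set (set (nat -> T)) := <<s cylinder_sets >>.

Definition future (s : nat) (w : Omega) : nat -> T := fun k => X (s + k) w.

Definition future_event (s : nat) : set (set Omega) :=
  [set E | exists2 B, product_sigma B & E = future s @^-1` B].

(* psi(tau), as an extended real (the supremum may be +oo) *)
Definition psi_coeff (tau : nat) : \bar R :=
  ereal_sup [set r : \bar R | exists (t : nat) (A : {set {ffun 'I_t -> T}})
      (E : set Omega),
    [/\ (0 < t)%N, future_event (t + tau) E,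
        (0 < P (block_event 0 t A))%E, (0 < P E)%E &
        r = (`| Pr (block_event 0 t A `&` E) /
                (Pr (block_event 0 t A) * Pr E) - 1 |)%:E ] ].

Definition psi_mixing : Prop := psi_coeff @ \oo --> 0%E.

End Defs.

From mathcomp Require Import all_boot all_order all_algebra.
From mathcomp Require Import all_classical all_reals all_analysis.
From mathcomp Require Import ring lra.
Import Order.TTheory GRing.Theory Num.Theory numFieldNormedType.Exports.
Local Open Scope classical_set_scope.
Local Open Scope ring_scope.

(* For a single word x, psi-mixing gives
     Pr(X_1^t in A, X_{t+tau+1}^{t+tau+n} = x) >= (1 - psi(tau)) Pr(X_1^t in A) P_n(x),
   stationarity identifying the probability of the shifted word with P_n(x).  Hence,
   for any lam >= psi(tau), the conditional law of the future block minus (1 - lam) P_n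
   is a nonnegative measure of total mass lam, and P' is this measure divided by lam. *)

Lemma sigma_algebra_word_fibre {U : Type} {G : set (set U)} {T : finType}
    {Y : nat -> U -> T} :
  sigma_algebra setT G -> (forall i x, G (Y i @^-1` [set x])) ->
  forall (s n : nat) (x : {ffun 'I_n -> T}),
    G [set u | [ffun i : 'I_n => Y (s + i) u] = x].
Proof.
move=> sG GY s n x.
have [GT _ _ GI] := (sigma_algebraP (fun A _ => @subsetT _ A)).1 sG.
suff -> : [set u | [ffun i : 'I_n => Y (s + i) u] = x] =
    \big[setI/setT]_(i < n) Y (s + i) @^-1` [set x i].
  by elim/big_ind: _ => // i _; exact: GY.
rewrite -bigcap_seq; apply/seteqP; split => u /=.
  by move=> <- i _; rewrite ffunE.
by move=> Yu; apply/ffunP => i; rewrite ffunE; apply: Yu; rewrite /= mem_index_enum.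
Qed.

Section real_probability.
Context {d : measure_display} {Omega : measurableType d} {R : realType}.
Variable P : probability Omega R.

Lemma Pr_ge0 (E : set Omega) : 0 <= Pr P E.
Proof. by rewrite /Pr fine_ge0. Qed.

Lemma Pr_gt0 {E : set Omega} : measurable E -> (0 < P E)%E -> 0 < Pr P E.
Proof. by move=> mE PE; rewrite /Pr fine_gt0 // PE ltey_eq fin_num_measure. Qed.

Lemma PrT : Pr P setT = 1.
Proof. by rewrite /Pr probability_setT. Qed.

End real_probability.

Section block_events.
Context {d : measure_display} {Omega : measurableType d} {R : realType}.
Variable P : probability Omega R.
Context {T : finType}.
Variable X : nat -> Omega -> T.
Hypothesis mX : forall i x, measurable (X i @^-1` [set x]).

Lemma block_event1E s n (x : {ffun 'I_n -> T}) :
  block_event X s n [set x] = [set w | block X s n w = x].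
Proof. by apply/seteqP; split => w; rewrite /block_event /= inE => /eqP. Qed.

Lemma measurable_block_event1 s n (x : {ffun 'I_n -> T}) :
  measurable (block_event X s n [set x]).
Proof.
rewrite block_event1E /block.
exact: (sigma_algebra_word_fibre (sigma_algebra_measurable Omega) mX).
Qed.

Lemma block_event_bigcup s n (B : {set {ffun 'I_n -> T}}) :
  block_event X s n B = \bigcup_(x in [set` B]) block_event X s n [set x].
Proof.
apply/seteqP; split => w; rewrite /block_event /=.
  by move=> Bw; exists (block X s n w) => //=; rewrite inE.
by move=> [x /= Bx]; rewrite inE => /eqP ->.
Qed.

Lemma measurable_block_event s n (B : {set {ffun 'I_n -> T}}) :
  measurable (block_event X s n B).
Proof.
rewrite block_event_bigcup; apply: fin_bigcup_measurable => // x _.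
exact: measurable_block_event1.
Qed.

Lemma block_eventT s n : block_event X s n [set: {ffun 'I_n -> T}] = setT.
Proof. by apply/seteqP; split => w // _; rewrite /block_event /= inE. Qed.

Lemma Pr_block_event_sum (C : set Omega) s n (B : {set {ffun 'I_n -> T}}) :
  measurable C ->
  Pr P (C `&` block_event X s n B) =
  \sum_(x in B) Pr P (C `&` block_event X s n [set x]).
Proof.
move=> mC; rewrite block_event_bigcup setI_bigcupr /Pr measure_fin_bigcup //.
- rewrite sum_fine => [|x _]; last first.
    rewrite fin_num_measure //.
    by apply: measurableI => //; exact: measurable_block_event1.
  by rewrite [in RHS]bigfs ?index_enum_uniq // => x; rewrite mem_index_enum.
- apply: trivIset_setIl => x y _ _ [w []].
  by rewrite !block_event1E /= => -> ->.
- by move=> x _; apply: measurableI => //; exact: measurable_block_event1.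
Qed.

Lemma Pr_block_event_total (C : set Omega) s n :
  measurable C -> \sum_x Pr P (C `&` block_event X s n [set x]) = Pr P C.
Proof.
move=> mC; rewrite -[in RHS](setIT C) -(block_eventT s n) Pr_block_event_sum //.
by apply: eq_bigl => x; rewrite inE.
Qed.

Lemma future_event_block_event1 s n (x : {ffun 'I_n -> T}) :
  future_event X s (block_event X s n [set x]).
Proof.
exists [set u : nat -> T | [ffun i : 'I_n => u i] = x].
  apply: (sigma_algebra_word_fibre (Y := fun k u => u k)
    (smallest_sigma_algebra _ _) _ 0) => i y.
  by apply: sub_sigma_algebra; exists i, y.
by rewrite block_event1E.
Qed.

End block_events.

Section mixing_weight.
Context {R : realType}.
Variable e : nat -> \bar R.

(* The harmonic term keeps the weight positive, so that P' can be normalised, without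
   spoiling the convergence to 0; an infinite psi(tau) gets the trivial weight 1. *)
Definition mixing_weight (tau : nat) : R :=
  if e tau \is a fin_num then Num.min 1 (`|fine (e tau)| + harmonic tau) else 1.

Lemma mixing_weight_gt0 tau : 0 < mixing_weight tau.
Proof.
rewrite /mixing_weight; case: ifP => // _.
by rewrite lt_min ltr01 ltr_pwDr ?harmonic_gt0.
Qed.

Lemma mixing_weight_lb {q : R} {tau} :
  0 <= q -> (`|q - 1|%:E <= e tau)%E -> 1 - mixing_weight tau <= q.
Proof.
move=> q_ge0 qe; rewrite /mixing_weight.
case: ifP => [efin|_]; last by rewrite subrr.
have : 1 - q <= `|fine (e tau)|.
  rewrite (le_trans (ler_norm _)) // distrC (le_trans _ (ler_norm _)) //.
  by rewrite -lee_fin fineK.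
have := @harmonic_gt0 R tau.
rewrite minEle; move: `|fine (e tau)| (harmonic tau) => a h.
by case: ifP => _; lra.
Qed.

Lemma cvg_mixing_weight : e @ \oo --> 0%E -> mixing_weight @ \oo --> 0.
Proof.
move=> /fine_cvgP [efin efine].
have bound : \forall tau \near \oo,
    0 <= mixing_weight tau <= `|fine (e tau)| + harmonic tau.
  apply: filterS efin => tau etau_fin.
  by rewrite ltW ?mixing_weight_gt0 //= /mixing_weight etau_fin ge_min lexx orbT.
apply: (squeeze_cvgr bound); first exact: cvg_cst.
rewrite -[0]addr0; apply: cvgD; last exact: cvg_harmonic.
have fine_e_norm := cvg_norm efine.
by rewrite normr0 in fine_e_norm; exact: fine_e_norm.
Qed.

End mixing_weight.

Lemma mixture_decomposition {R : realFieldType} {W : finType} {Q Pi : W -> R}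
    {lam : R} :
  0 < lam -> \sum_x Q x = 1 -> \sum_x Pi x = 1 ->
  (forall x, (1 - lam) * Pi x <= Q x) ->
  exists p : W -> R, [/\ forall x, 0 <= p x, \sum_x p x = 1 &
    forall B : {set W},
      \sum_(x in B) Q x = (1 - lam) * \sum_(x in B) Pi x + lam * \sum_(x in B) p x].
Proof.
move=> lam_gt0 Q1 Pi1 PiQ.
pose p x := (Q x - (1 - lam) * Pi x) / lam.
have sum_p (S : pred W) : lam * \sum_(x | S x) p x =
    \sum_(x | S x) Q x - (1 - lam) * \sum_(x | S x) Pi x.
  rewrite mulr_sumr mulr_sumr -sumrB; apply: eq_bigr => x _.
  by rewrite /p mulrC divfK ?gt_eqF.
exists p; split.
- by move=> x; rewrite divr_ge0 ?subr_ge0 ?PiQ // ltW.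
- apply: (mulfI (lt0r_neq0 lam_gt0)).
  by rewrite (sum_p xpredT) Q1 Pi1 mulr1; ring.
- by move=> B; rewrite (sum_p (mem B)); ring.
Qed.

Section psi_mixing_bound.
Context {d : measure_display} {Omega : measurableType d} {R : realType}.
Variable P : probability Omega R.
Context {T : finType}.
Variable X : nat -> Omega -> T.

Lemma psi_coeff_ub {t tau} {A : {set {ffun 'I_t -> T}}} {E : set Omega} :
  (0 < t)%N -> future_event X (t + tau) E ->
  (0 < P (block_event X 0 t A))%E -> (0 < P E)%E ->
  (`|Pr P (block_event X 0 t A `&` E) /
      (Pr P (block_event X 0 t A) * Pr P E) - 1|%:E <= psi_coeff P X tau)%E.
Proof. by move=> t_gt0 fE PA PE; apply: ereal_sup_ubound; exists t, A, E. Qed.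

Lemma Pr_setI_future_ge t tau (A : {set {ffun 'I_t -> T}}) (E : set Omega) :
  (0 < t)%N -> future_event X (t + tau) E -> measurable E ->
  measurable (block_event X 0 t A) -> (0 < P (block_event X 0 t A))%E ->
  (1 - mixing_weight (psi_coeff P X) tau) * Pr P E * Pr P (block_event X 0 t A)
    <= Pr P (block_event X 0 t A `&` E).
Proof.
move=> t_gt0 fE mE mA PA.
have a_gt0 := Pr_gt0 P mA PA.
have [PE0|PE_neq0] := eqVneq (P E) 0%E.
  by rewrite [Pr P E]/Pr PE0 mulr0 mul0r Pr_ge0.
have PE_gt0 : (0 < P E)%E by rewrite lt0e PE_neq0 measure_ge0.
have e_gt0 := Pr_gt0 P mE PE_gt0.
have q_ge0 : 0 <= Pr P (block_event X 0 t A `&` E) /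
    (Pr P (block_event X 0 t A) * Pr P E).
  by rewrite divr_ge0 ?Pr_ge0 // ltW // mulr_gt0.
have := mixing_weight_lb _ q_ge0 (psi_coeff_ub t_gt0 fE PA PE_gt0).
by rewrite ler_pdivlMr ?mulr_gt0 // -mulrA [Pr P E * _]mulrC.
Qed.

End psi_mixing_bound.

Theorem lemma1 (d : measure_display) (Omega : measurableType d) (R : realType)
  (P : probability Omega R) (T : finType) (X : nat -> Omega -> T) :
  (forall (i : nat) (x : T), measurable (X i @^-1` [set x])) ->
  stationary P X -> psi_mixing P X ->
  exists lam : nat -> R, lam @ \oo --> 0 /\
    forall (t tau n : nat) (A : {set {ffun 'I_t -> T}}),
      (0 < t)%N -> (0 < P (block_event X 0 t A))%E ->
      exists p : {ffun 'I_n -> T} -> R,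
        [/\ (forall x, 0 <= p x), \sum_x p x = 1 &
          forall B : {set {ffun 'I_n -> T}},
            Pr P (block_event X 0 t A `&` block_event X (t + tau) n B)
              / Pr P (block_event X 0 t A)
            = (1 - lam tau) * Pr P (block_event X 0 n B)
              + lam tau * \sum_(x in B) p x ].
Proof.
move=> mX stat mixing.
exists (mixing_weight (psi_coeff P X)); split; first exact: cvg_mixing_weight.
move=> t tau n A t_gt0 PA.
set EA := block_event X 0 t A in PA *.
have mEA : measurable EA := measurable_block_event X mX 0 t A.
have a_gt0 := Pr_gt0 P mEA PA.
pose Q x := Pr P (EA `&` block_event X (t + tau) n [set x]) / Pr P EA.
pose Pi x := Pr P (setT `&` block_event X 0 n [set x]).
have Q1 : \sum_x Q x = 1.
  by rewrite -mulr_suml Pr_block_event_total // divff ?gt_eqF.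
have Pi1 : \sum_x Pi x = 1 by rewrite Pr_block_event_total // PrT.
have PiQ x : (1 - mixing_weight (psi_coeff P X) tau) * Pi x <= Q x.
  rewrite ler_pdivlMr // /Pi setTI /Pr -(stat n (t + tau)).
  apply: Pr_setI_future_ge => //; first exact: future_event_block_event1.
  exact: measurable_block_event1.
have [p [p_ge0 p1 Q_mix]] :=
  mixture_decomposition (mixing_weight_gt0 _ tau) Q1 Pi1 PiQ.
exists p; split => // B.
by rewrite -[block_event X 0 n B]setTI !Pr_block_event_sum // mulr_suml Q_mix.
Qed.
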